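(* For $N\in\mathbb{N}$ and $m\in\mathbb{Z}_+$, $$\gamma_N^{2m,2m}=2^{2m}\,m!\,(2m)!\,\Bigl(\frac N2+m-1\Bigr)_m.$$
   Context: $|x|_N$ is the Euclidean norm on $\mathbb{R}^N$, $I_N=\{1,\ldots,N\}$, $D_i=\partial_{x_{i_1}}\cdots\partial_{x_{i_k}}$ for $i\in I_N^k$, $|\nabla_N^k u(x)|_{N^k}=\bigl(\sum_{i\in I_N^k}(D_iu(x))^2\bigr)^{1/2}$ (for $k=0$ this is $|u(x)|$). For $k\in\mathbb{Z}_+$, $s\in\mathbb{R}$, $\gamma_N^{s,k}$ denotes the constant value of $(|x|_N^{k-s}|\nabla_N^k[|x|_N^s]|_{N^k})^2$ on $\mathbb{R}^N\setminus\{0\}$ (it is known to be constant). $(\nu)_m=\prod_{j=0}^{m-1}(\nu-j)$, $(\nu)_0=1$. *)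

From HB Require Import structures.
From mathcomp Require Import all_boot all_order all_algebra.
From mathcomp Require Import all_classical all_reals all_analysis.
Set Implicit Arguments. Unset Strict Implicit. Unset Printing Implicit Defensive.
Import Order.TTheory GRing.Theory Num.Theory.
Import numFieldNormedType.Exports.
Local Open Scope ring_scope.

Section Defs.
Variable R : realType.
Variable N : nat.

Definition eucl_norm (x : 'rV[R]_N) : R := Num.sqrt (\sum_(j < N) x ord0 j ^+ 2).

Definition partial (j : 'I_N) (u : 'rV[R]_N -> R) : 'rV[R]_N -> R :=
  fun x => 'D_(delta_mx ord0 j) u x.

Definition Dmulti (k : nat) (i : k.-tuple 'I_N) (u : 'rV[R]_N -> R) : 'rV[R]_N -> R :=
  foldr partial u i.

Definition grad_norm (k : nat) (u : 'rV[R]_N -> R) (x : 'rV[R]_N) : R :=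
  Num.sqrt (\sum_(i : k.-tuple 'I_N) (Dmulti i u x) ^+ 2).

Definition norm_pow (s : R) : 'rV[R]_N -> R := fun x => eucl_norm x `^ s.

(* the quantity (|x|^{k-s} |nabla^k [|x|^s]|)^2 whose constant value is gamma_N^{s,k} *)
Definition gamma_at (s : R) (k : nat) (x : 'rV[R]_N) : R :=
  (eucl_norm x `^ (k%:R - s) * grad_norm k (norm_pow s) x) ^+ 2.
End Defs.

Definition falling (R : ringType) (nu : R) (m : nat) : R :=
  \prod_(j < m) (nu - j%:R).

From HB Require Import structures.
From mathcomp Require Import all_boot all_order all_algebra.
From mathcomp Require Import all_classical all_reals all_analysis.
From mathcomp Require Import zify ring.
Set Implicit Arguments.
Unset Strict Implicit.
Unset Printing Implicit Defensive.

Import Order.TTheory GRing.Theory Num.Theory.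
Import numFieldNormedType.Exports.
Local Open Scope ring_scope.

(* Write [f_m x = |x|^(2m) = (sum_j x_j^2)^m], a polynomial of degree [2m], and
   [B_k(u, v) = sum_(|i| = k) D_i u * D_i v], so that the quantity to compute is
   [B_(2m)(f_m, f_m)].  Three identities drive an induction on [m]:
   [d_j f_(m+1) = 2(m+1) x_j f_m]; [B_(d+1)(x_j g, q) = (d+1) B_d(g, d_j q)] whenever
   [g] has degree at most [d]; and [sum_j d_j (x_j f_m) = (N + 2m) f_m].  Together they
   give [B_(2m+2)(f_(m+1), f_(m+1)) = 4(m+1)^2 (2m+1)(N+2m) B_(2m)(f_m, f_m)], which is the
   ratio of consecutive values of the closed form. *)

Lemma sum_tuple0 (T : finType) (M : nmodType) (F : 0.-tuple T -> M) :
  \sum_(t : 0.-tuple T) F t = F [tuple].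
Proof. by rewrite (big_pred1 [tuple]) // => t; apply/esym/eqP/val_inj; case: t => -[]. Qed.

Lemma sum_tupleS (T : finType) (M : nmodType) k (F : k.+1.-tuple T -> M) :
  \sum_(t : k.+1.-tuple T) F t = \sum_(a : T) \sum_(t : k.-tuple T) F [tuple of a :: t].
Proof.
rewrite pair_big (reindex (fun p : T * k.-tuple T => [tuple of p.1 :: p.2])) //=.
exists (fun t : k.+1.-tuple T => (thead t, [tuple of behead t])).
  by move=> [a t] _; congr pair; apply: val_inj.
by move=> t _; rewrite [in RHS](tuple_eta t).
Qed.

Lemma fallingS (R : comNzRingType) (nu : R) m :
  falling nu m.+1 = nu * falling (nu - 1) m.
Proof.
rewrite /falling big_ord_recl subr0; congr (_ * _).
by apply: eq_bigr => i _; rewrite /bump /= -natr1 opprD addrA addrAC.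
Qed.

Lemma sum_delta_mul (R : pzSemiRingType) (I : finType) (j : I) (F : I -> R) :
  \sum_i (j == i)%:R * F i = F j.
Proof.
rewrite (bigD1 j) //= eqxx mul1r big1 ?addr0 // => i.
by rewrite eq_sym => /negbTE ->; rewrite mul0r.
Qed.

Section PolynomialFunctions.
Variables (R : realType) (N : nat).
Local Notation V := 'rV[R]_N.
Implicit Types (f g q : V -> R) (j l : 'I_N) (x v : V).

Lemma derivable_coord j x v : derivable (fun y : V => y ord0 j) x v.
Proof. by move/derivable_mxP: (@derivable_id _ _ x v); apply. Qed.

Lemma derive_coord j x v : 'D_v (fun y : V => y ord0 j) x = v ord0 j.
Proof.
have := derive_mx (@derivable_id _ _ x v).
by rewrite derive_id => /(congr1 (fun M : V => M ord0 j)) ->; rewrite mxE.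
Qed.

Lemma partial_cst j (c : R) : partial j (fun _ : V => c) = fun=> 0.
Proof. by apply/funext => y; exact: derive_cst. Qed.

Lemma partial_coord j l : partial j (fun y : V => y ord0 l) = fun=> (l == j)%:R.
Proof. by apply/funext => y; rewrite /partial derive_coord mxE eqxx. Qed.

Section Leibniz.
Variables (j : 'I_N) (f g : V -> R).
Hypotheses (df : forall x, derivable f x (delta_mx ord0 j))
           (dg : forall x, derivable g x (delta_mx ord0 j)).

Lemma partialD : partial j (fun y => f y + g y) = fun y => partial j f y + partial j g y.
Proof. by apply/funext => y; exact: deriveD. Qed.

Lemma partialM :
  partial j (fun y => f y * g y) = fun y => f y * partial j g y + g y * partial j f y.
Proof. by apply/funext => y; exact: deriveM. Qed.

End Leibniz.

Lemma partial_sum n (F : 'I_n -> V -> R) j :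
  (forall i x, derivable (F i) x (delta_mx ord0 j)) ->
  partial j (fun y => \sum_(i < n) F i y) = fun y => \sum_(i < n) partial j (F i) y.
Proof. by move=> dF; apply/funext => y; rewrite /partial -derive_sum // fct_sumE. Qed.

(* Polynomial functions of degree at most [n], generated inductively so that derivability
   and the symmetry of second partials can be proved by induction. *)
Inductive polyfun : nat -> (V -> R) -> Prop :=
| polyfun_cst n (c : R) : polyfun n (fun=> c)
| polyfun_coord n j : polyfun n.+1 (fun y => y ord0 j)
| polyfunD n f g : polyfun n f -> polyfun n g -> polyfun n (fun y => f y + g y)
| polyfunM n k f g : polyfun n f -> polyfun k g -> polyfun (n + k) (fun y => f y * g y).

Lemma polyfun_derivable n f : polyfun n f -> forall x v, derivable f x v.
Proof.
elim=> {n f} [n c|n j|n f g _ df _ dg|n k f g _ df _ dg].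
- exact: derivable_cst.
- exact: derivable_coord.
- by move=> x v; apply: derivableD.
- by move=> x v; apply: derivableM.
Qed.

Section PolyfunLeibniz.
Variables (n k : nat) (f g : V -> R) (j : 'I_N).
Hypotheses (pf : polyfun n f) (pg : polyfun k g).

Lemma partialD_poly : partial j (fun y => f y + g y) = fun y => partial j f y + partial j g y.
Proof. exact: partialD (polyfun_derivable pf ^~ _) (polyfun_derivable pg ^~ _). Qed.

Lemma partialM_poly :
  partial j (fun y => f y * g y) = fun y => f y * partial j g y + g y * partial j f y.
Proof. exact: partialM (polyfun_derivable pf ^~ _) (polyfun_derivable pg ^~ _). Qed.

End PolyfunLeibniz.

Lemma polyfun_le n m f : (n <= m)%N -> polyfun n f -> polyfun m f.
Proof.
move=> + pf; elim: pf m => {n f} [n c|n j|n f g _ IHf _ IHg|n k f g pf _ _ IHg] m le_nm.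
- exact: polyfun_cst.
- by case: m le_nm => // m _; exact: polyfun_coord.
- by apply: polyfunD; [exact: IHf | exact: IHg].
- have le_n : (n <= m)%N by lia.
  by rewrite -(subnKC le_n); apply: polyfunM pf (IHg _ _); lia.
Qed.

Lemma polyfun_sum n m (F : 'I_m -> V -> R) :
  (forall i, polyfun n (F i)) -> polyfun n (fun y => \sum_(i < m) F i y).
Proof.
move=> pF; rewrite -fct_sumE; apply: big_ind => //.
- exact: polyfun_cst.
- by move=> u w; exact: polyfunD.
Qed.

Lemma polyfunX n k f : polyfun n f -> polyfun (n * k) (fun y => f y ^+ k).
Proof.
move=> pf; elim: k => [|k IH]; first exact: polyfun_cst.
by rewrite mulnS; under eq_fun do rewrite exprS; exact: polyfunM.
Qed.

Lemma partial_polyfun0 f j : polyfun 0 f -> partial j f = fun=> 0.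
Proof.
suff gen n : polyfun n f -> n = 0%N -> partial j f = fun=> 0 by move/gen; apply.
elim=> {n f} [n c|//|n f g pf IHf pg IHg|n k f g pf IHf pg IHg].
- by rewrite partial_cst.
- move=> e0; rewrite (partialD_poly j pf pg).
  by rewrite IHf ?IHg //; apply/funext => y; rewrite addr0.
- move/eqP; rewrite addn_eq0 => /andP[/eqP n0 /eqP k0].
  rewrite (partialM_poly j pf pg).
  by rewrite IHf ?IHg //; apply/funext => y; rewrite !mulr0 addr0.
Qed.

Lemma polyfun_partial n f j : polyfun n f -> polyfun n.-1 (partial j f).
Proof.
have leibniz_term a b u w : polyfun a u -> polyfun b w -> polyfun b.-1 (partial j w) ->
    polyfun (a + b).-1 (fun y => u y * partial j w y).
  case: b => [|b] pu pw pw'.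
    rewrite addn0 (_ : (fun y => _) = fun=> 0); first exact: polyfun_cst.
    by apply/funext => y; rewrite (partial_polyfun0 j pw) mulr0.
  by rewrite addnS; exact: polyfunM.
elim=> {n f} [n c|n l|n f g pf IHf pg IHg|n k f g pf IHf pg IHg].
- by rewrite partial_cst; exact: polyfun_cst.
- by rewrite partial_coord; exact: polyfun_cst.
- by rewrite (partialD_poly j pf pg); exact: polyfunD.
- rewrite (partialM_poly j pf pg).
  by apply: polyfunD; [|rewrite addnC]; exact: leibniz_term.
Qed.

Lemma polyfun_partialW n f j : polyfun n f -> polyfun n (partial j f).
Proof. by move=> pf; apply: polyfun_le (polyfun_partial j pf); exact: leq_pred. Qed.

Lemma partialC n f j l : polyfun n f -> partial j (partial l f) = partial l (partial j f).
Proof.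
elim=> {n f} [n c|n i|n f g pf IHf pg IHg|n k f g pf IHf pg IHg].
- by rewrite !partial_cst.
- by rewrite !partial_coord !partial_cst.
- rewrite (partialD_poly l pf pg) (partialD_poly j pf pg).
  rewrite (partialD_poly j (polyfun_partialW l pf) (polyfun_partialW l pg)).
  by rewrite (partialD_poly l (polyfun_partialW j pf) (polyfun_partialW j pg)) IHf IHg.
- move: (polyfun_partialW j pf) (polyfun_partialW j pg) => pfj pgj.
  move: (polyfun_partialW l pf) (polyfun_partialW l pg) => pfl pgl.
  rewrite (partialM_poly l pf pg) (partialM_poly j pf pg).
  rewrite (partialD_poly j (polyfunM pf pgl) (polyfunM pg pfl)).
  rewrite (partialD_poly l (polyfunM pf pgj) (polyfunM pg pfj)).
  rewrite (partialM_poly j pf pgl) (partialM_poly j pg pfl).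
  rewrite (partialM_poly l pf pgj) (partialM_poly l pg pfj).
  apply/funext => y; rewrite IHf IHg.
  (* [ring] compares atoms up to conversion, which would unfold [partial]. *)
  move: (f y) (g y) (partial j f y) (partial j g y) (partial l f y) (partial l g y).
  by move: (partial l (partial j f) y) (partial l (partial j g) y) => *; ring.
Qed.

Definition Dseq (s : seq 'I_N) f := foldr (@partial R N) f s.

Lemma polyfun_Dseq n f s : polyfun n f -> polyfun n (Dseq s f).
Proof. by move=> pf; elim: s => //= j s; exact: polyfun_partialW. Qed.

Lemma partial_Dseq n f j s : polyfun n f -> partial j (Dseq s f) = Dseq s (partial j f).
Proof. by move=> pf; elim: s => //= l s IH; rewrite (partialC j l (polyfun_Dseq s pf)) IH. Qed.

Lemma DseqD n k f g s : polyfun n f -> polyfun k g ->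
  Dseq s (fun y => f y + g y) = fun y => Dseq s f y + Dseq s g y.
Proof.
by move=> pf pg; elim: s => //= j s ->; exact: partialD_poly (polyfun_Dseq s pf) (polyfun_Dseq s pg).
Qed.

Lemma DseqZ n (c : R) f s : polyfun n f -> Dseq s (fun y => c * f y) = fun y => c * Dseq s f y.
Proof.
move=> pf; elim: s => //= j s ->.
rewrite (partialM_poly j (polyfun_cst 0 c) (polyfun_Dseq s pf)) partial_cst.
by apply/funext => y; rewrite mulr0 addr0.
Qed.

Lemma Dseq_sum n m (F : 'I_m -> V -> R) s : (forall i, polyfun n (F i)) ->
  Dseq s (fun y => \sum_(i < m) F i y) = fun y => \sum_(i < m) Dseq s (F i) y.
Proof.
move=> pF; elim: s => //= j s ->; apply: partial_sum => i x.
exact: polyfun_derivable (polyfun_Dseq s (pF i)) x _.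
Qed.

Definition grad_dot k f g x := \sum_(i : k.-tuple 'I_N) Dseq i f x * Dseq i g x.

Lemma grad_dot0 f g x : grad_dot 0 f g x = f x * g x.
Proof. by rewrite /grad_dot sum_tuple0. Qed.

Lemma grad_dotC k f g x : grad_dot k f g x = grad_dot k g f x.
Proof. by apply: eq_bigr => i _; rewrite mulrC. Qed.

Lemma grad_dotS n m k f g x : polyfun n f -> polyfun m g ->
  grad_dot k.+1 f g x = \sum_j grad_dot k (partial j f) (partial j g) x.
Proof.
move=> pf pg; rewrite /grad_dot sum_tupleS; apply: eq_bigr => j _; apply: eq_bigr => t _ /=.
by rewrite (partial_Dseq j t pf) (partial_Dseq j t pg).
Qed.

Lemma grad_dotDl n m k f g q x : polyfun n f -> polyfun m g ->
  grad_dot k (fun y => f y + g y) q x = grad_dot k f q x + grad_dot k g q x.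
Proof.
move=> pf pg; rewrite /grad_dot -big_split; apply: eq_bigr => i _.
by rewrite (DseqD i pf pg) mulrDl.
Qed.

Lemma grad_dotZl n k (c : R) f q x : polyfun n f ->
  grad_dot k (fun y => c * f y) q x = c * grad_dot k f q x.
Proof.
move=> pf; rewrite /grad_dot mulr_sumr; apply: eq_bigr => i _.
by rewrite (DseqZ c i pf) mulrA.
Qed.

Lemma grad_dotZr n k (c : R) f q x : polyfun n f ->
  grad_dot k q (fun y => c * f y) x = c * grad_dot k q f x.
Proof. by move=> pf; rewrite grad_dotC (grad_dotZl _ _ _ _ pf) grad_dotC. Qed.

Lemma grad_dot_sumr n k (F : 'I_N -> V -> R) g x : (forall j, polyfun n (F j)) ->
  grad_dot k g (fun y => \sum_j F j y) x = \sum_j grad_dot k g (F j) x.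
Proof.
move=> pF; rewrite /grad_dot exchange_big; apply: eq_bigr => i _ /=.
by rewrite (Dseq_sum i pF) mulr_sumr.
Qed.

Lemma partial_coordM n j l g : polyfun n g ->
  partial l (fun y => y ord0 j * g y) = fun y => y ord0 j * partial l g y + (j == l)%:R * g y.
Proof.
move=> pg; rewrite (partialM_poly l (polyfun_coord 0 j) pg) partial_coord.
by apply/funext => y; rewrite [g y * _]mulrC.
Qed.

(* By Leibniz, a derivative hitting [y_j] in any of the [d+1] slots leaves [B_d(g, d_j q)],
   and the term where all [d+1] derivatives hit [g] vanishes. *)
Lemma grad_dot_coordMl d n j g q x : polyfun d g -> polyfun n q ->
  grad_dot d.+1 (fun y => y ord0 j * g y) q x = d.+1%:R * grad_dot d g (partial j q) x.
Proof.
elim: d n g q => [|d IH] n g q pg pq.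
all: rewrite (grad_dotS _ _ (polyfunM (polyfun_coord 0 j) pg) pq).
all: under eq_bigr => l _ do rewrite (partial_coordM j l pg)
       (grad_dotDl _ _ _ (polyfunM (polyfun_coord 0 j) (polyfun_partialW l pg))
                   (polyfunM (polyfun_cst 0 _) pg)) (grad_dotZl _ _ _ _ pg).
all: rewrite big_split /= sum_delta_mul.
- rewrite big1 ?add0r ?mul1r // => l _.
  by rewrite (partial_polyfun0 l pg) grad_dot0 mulr0 mul0r.
- under eq_bigr => l _ do rewrite (IH _ _ _ (polyfun_partial l pg) (polyfun_partialW l pq))
       (partialC j l pq).
  rewrite -mulr_sumr -(grad_dotS _ _ pg (polyfun_partialW j pq)).
  by rewrite [in RHS]mulrSr mulrDl mul1r.
Qed.

Lemma partialX n f j k : polyfun n f ->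
  partial j (fun y => f y ^+ k) = fun y => k%:R * f y ^+ k.-1 * partial j f y.
Proof.
move=> pf; apply/funext => y.
by rewrite /partial -exprfctE deriveX //; exact: polyfun_derivable pf y _.
Qed.

Definition sqnorm (y : V) := \sum_l y ord0 l ^+ 2.

Lemma polyfun_sqnorm : polyfun 2 sqnorm.
Proof. by apply: polyfun_sum => l; have := polyfunX 2 (polyfun_coord 0 l); rewrite mul1n. Qed.

Lemma partial_sqnorm j : partial j sqnorm = fun y => 2 * y ord0 j.
Proof.
have pX l := polyfunX 2 (polyfun_coord 0 l).
rewrite /sqnorm partial_sum => [|l x]; last exact: polyfun_derivable (pX l) x _.
apply/funext => y; under eq_bigr => l _ do rewrite (partialX _ _ (polyfun_coord 0 l)) partial_coord.
by rewrite -(sum_delta_mul j (fun l => 2 * y ord0 l)); apply: eq_bigr => l _; rewrite eq_sym mulrC.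
Qed.

Lemma partial_sqnormX j k :
  partial j (fun y => sqnorm y ^+ k.+1) = fun y => 2 * k.+1%:R * (y ord0 j * sqnorm y ^+ k).
Proof.
rewrite (partialX _ _ polyfun_sqnorm) partial_sqnorm.
by apply/funext => y; rewrite mulrC -!mulrA; congr (_ * _); rewrite mulrCA.
Qed.

Lemma sum_partial_coordM_sqnormX m :
  (fun y => \sum_j partial j (fun y => y ord0 j * sqnorm y ^+ m) y) =
  fun y => (N + 2 * m)%:R * sqnorm y ^+ m.
Proof.
apply/funext => y.
under eq_bigr => j _ do rewrite (partial_coordM _ _ (polyfunX m polyfun_sqnorm)) eqxx mul1r.
rewrite big_split /= sumr_const card_ord natrD mulrDl [N%:R * _]mulr_natl addrC; congr (_ + _).
case: m => [|m].
  by rewrite muln0 mul0r big1 // => j _; rewrite (partialX _ _ polyfun_sqnorm) !mul0r mulr0.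
under eq_bigr => j _ do rewrite partial_sqnormX mulrCA [y ord0 j * (_ * _)]mulrA -expr2.
by rewrite -mulr_sumr -mulr_suml exprS natrM.
Qed.

Lemma grad_dot_sqnormX_rec m x :
  grad_dot (2 * m.+1) (fun y => sqnorm y ^+ m.+1) (fun y => sqnorm y ^+ m.+1) x =
  (2 * m.+1%:R) ^+ 2 * (2 * m).+1%:R * (N + 2 * m)%:R *
    grad_dot (2 * m) (fun y => sqnorm y ^+ m) (fun y => sqnorm y ^+ m) x.
Proof.
have pS k := polyfunX k polyfun_sqnorm.
have pX j := polyfunM (polyfun_coord 0 j) (pS m).
rewrite mulnS add2n (grad_dotS _ _ (pS _) (pS _)).
under eq_bigr => j _ do rewrite partial_sqnormX (grad_dotZl _ _ _ _ (pX j))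
  (grad_dotZr _ _ _ _ (pX j)) (grad_dot_coordMl _ _ (pS m) (pX j)).
rewrite -!mulr_sumr -(grad_dot_sumr _ _ _ (fun j => polyfun_partialW j (pX j))).
by rewrite sum_partial_coordM_sqnormX (grad_dotZr _ _ _ _ (pS m)) expr2 !mulrA.
Qed.

Lemma grad_dot_sqnormX m x :
  grad_dot (2 * m) (fun y => sqnorm y ^+ m) (fun y => sqnorm y ^+ m) x =
  2 ^+ (2 * m) * (m`!)%:R * ((2 * m)`!)%:R * falling (N%:R / 2 + m%:R - 1) m.
Proof.
elim: m => [|m IH]; first by rewrite grad_dot0 /falling big_ord0 !mulr1.
rewrite grad_dot_sqnormX_rec IH fallingS.
have -> : N%:R / 2 + m.+1%:R - 1 = N%:R / 2 + m%:R :> R by ring.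
have four_pow : 2 ^+ (2 * m.+1) = 4 * 2 ^+ (2 * m) :> R.
  by rewrite mulnS add2n !exprS mulrA -natrM.
rewrite four_pow mulnS add2n !factS !natrM.
move: (falling _ _) (2 ^+ (2 * m)) (m`!%:R) ((2 * m)`!%:R) => F E fm f2m.
by field.
Qed.

End PolynomialFunctions.

Lemma norm_pow_even (R : realType) N m :
  norm_pow (2 * m)%:R = fun y : 'rV[R]_N => sqnorm y ^+ m.
Proof.
apply/funext => y; rewrite /norm_pow /eucl_norm powR_mulrn ?sqrtr_ge0 // exprM sqr_sqrtr //.
by apply: sumr_ge0 => j _; exact: sqr_ge0.
Qed.

Lemma grad_norm_sqr (R : realType) N k (u : 'rV[R]_N -> R) x :
  grad_norm k u x ^+ 2 = grad_dot k u u x.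
Proof.
rewrite /grad_norm sqr_sqrtr; last by apply: sumr_ge0 => i _; exact: sqr_ge0.
by apply: eq_bigr => i _; rewrite expr2.
Qed.

(* With [s = k = 2m] the weight [|x|^(k-s)] is [1] and [|x|^(2m)] is a polynomial. *)
Theorem lemma3p3 (R : realType) (N m : nat) : (0 < N)%N ->
  forall x : 'rV[R]_N, x != 0 ->
  gamma_at (2 * m)%:R (2 * m) x =
    2 ^+ (2 * m) * (m`!)%:R * ((2 * m)`!)%:R * falling (N%:R / 2 + m%:R - 1) m.
Proof.
move=> _ x _.
rewrite /gamma_at subrr powRr0 mul1r grad_norm_sqr norm_pow_even.
exact: grad_dot_sqnormX.
Qed.
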